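(* Let $G$ be a finite group and $\mathcal{P}$ a prime ideal of $\mathrm{Gh}(\underline{A}_G)$ with $\mathcal{P}(G/e)=(0)\subseteq\mathbb{Z}$. For $I\le G$ let $p_I\ge0$ be the integer with $\mathcal{P}(G/G)=\widetilde{A}(G)\cap\prod_{I\le G}p_I\mathbb{Z}$, and set $\mathscr{F}(\mathcal{P})=\{I\le G: p_I\ne1\}$ and $\mathscr{F}_0=\{I\le G:p_I=0\}$. Then $\mathscr{F}(\mathcal{P})=\mathscr{F}_0$ and $\mathcal{P}=\mathcal{P}_{\mathscr{F}(\mathcal{P}),0}$.
   Context: For $H\le G$, $\widetilde{A}(H)$ is the subring of $\prod_{I\le H}\mathbb{Z}$ of tuples $(a_I)_{I\le H}$ with $a_{hIh^{-1}}=a_I$ for $h\in H$ (so $\widetilde{A}(e)=\mathbb{Z}$). $\mathrm{Gh}(\underline{A}_G)$ is the $G$-Tambara functor with $\mathrm{Gh}(\underline{A}_G)(G/H)=\widetilde{A}(H)$ and, for $H\le K$, $g\in G$, $I^g=g^{-1}Ig$: $\mathrm{res}^K_H(b)_L=b_L$; $\mathrm{tr}^K_H(a)_I=\sum_{kH\in K/H,\ I^k\le H}a_{I^k}$; $\mathrm{nm}^K_H(a)_I=\prod_{IgH\in I\backslash K/H}a_{I^g\cap H}$; $c_{g,H}(a)_J=a_{J^g}$ for $J\le gHg^{-1}$. For a set $\mathscr{F}$ of subgroups closed under conjugation and $p$ a prime or $0$, $\mathcal{P}_{\mathscr{F},p}(G/H)=\widetilde{A}(H)\cap\prod_{I\le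 H}\delta(I)\mathbb{Z}$ where $\delta(I)=p$ if $I\in\mathscr{F}$ and $1$ otherwise. A Tambara ideal is a collection of ideals $\mathcal{I}(G/H)$ closed under all restrictions, transfers, norms and conjugations; it is prime (Nakaoka) if it is not everything and whenever $a\in T(G/K_1)$, $b\in T(G/K_2)$ satisfy $\big(\mathrm{nm}^L_{g_1H_1g_1^{-1}}c_{g_1,H_1}\mathrm{res}^{K_1}_{H_1}(a)\big)\big(\mathrm{nm}^L_{g_2H_2g_2^{-1}}c_{g_2,H_2}\mathrm{res}^{K_2}_{H_2}(b)\big)\in\mathcal{I}(G/L)$ for all $L,H_1,H_2\le G$, $g_1,g_2\in G$ with $H_i\le K_i$, $g_iH_ig_i^{-1}\le L$, then $a\in\mathcal{I}(G/K_1)$ or $b\in\mathcal{I}(G/K_2)$. *)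

From HB Require Import structures.
From mathcomp Require Import all_boot all_order all_algebra all_fingroup.
Set Implicit Arguments. Unset Strict Implicit. Unset Printing Implicit Defensive.
Import GRing.Theory Num.Theory.
Local Open Scope group_scope.

(* An element of Atilde(H) is a function a : {group gT} -> int,
   a I being the I-coordinate, required to vanish when I is not a subgroup
   of H.  I^g = g^-1 I g is mathcomp's (I :^ g); g H g^-1 is (H :^ g^-1). *)

Section GhostDefs.
Variable gT : finGroupType.

Definition func := {group gT} -> int.

Definition Atil (H : {group gT}) (a : func) : Prop :=
  (forall I : {group gT}, ~~ (I \subset H) -> a I = 0%R) /\
  (forall (I : {group gT}) (h : gT), I \subset H -> h \in H ->
       a (I :^ h)%G = a I).

Definition fzero : func := fun _ => 0%R.
Definition fadd (a b : func) : func := fun I => (a I + b I)%R.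
Definition fopp (a : func) : func := fun I => (- a I)%R.
Definition fmul (a b : func) : func := fun I => (a I * b I)%R.

(* res^K_H (the source K plays no role in the formula) *)
Definition res (H : {group gT}) (b : func) : func :=
  fun L => if L \subset H then b L else 0%R.

Definition tr (K H : {group gT}) (a : func) : func :=
  fun I => if I \subset K then
    (\sum_(C in lcosets H K | I :^ repr C \subset H) a (I :^ repr C)%G)%R
  else 0%R.

Definition dcosets (I H K : {set gT}) : {set {set gT}} :=
  [set ((I :* g) * H)%g | g in K].

Definition nm (K H : {group gT}) (a : func) : func :=
  fun I => if I \subset K then
    (\prod_(D in dcosets I H K) a ((I :^ repr D) :&: H)%G)%R
  else 0%R.

(* c_{g,H}(a)_J = a_{J^g}, landing in Atilde(g H g^-1) *)
Definition cj (g : gT) (a : func) : func := fun J => a (J :^ g)%G.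

Definition is_ideal (H : {group gT}) (S : func -> Prop) : Prop :=
  [/\ forall a, S a -> Atil H a,
      S fzero,
      forall a b, S a -> S b -> S (fadd a b),
      forall a, S a -> S (fopp a) &
      forall r a, Atil H r -> S a -> S (fmul r a)].

(* Tambara ideal of Gh(A_G); P H is the ideal P(G/H). *)
Definition tambara_ideal (G : {group gT}) (P : {group gT} -> func -> Prop) :=
  [/\ forall H : {group gT}, H \subset G -> is_ideal H (P H),
      forall (H K : {group gT}) b, H \subset K -> K \subset G ->
        P K b -> P H (res H b),
      forall (H K : {group gT}) a, H \subset K -> K \subset G ->
        P H a -> P K (tr K H a),
      forall (H K : {group gT}) a, H \subset K -> K \subset G ->
        P H a -> P K (nm K H a) &
      forall (H : {group gT}) g a, H \subset G -> g \in G ->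
        P H a -> P (H :^ g^-1)%G (cj g a)].

(* Prime in the sense of Nakaoka *)
Definition prime_tambara_ideal (G : {group gT}) (P : {group gT} -> func -> Prop) :=
  [/\ tambara_ideal G P,
      exists H : {group gT}, H \subset G /\ exists a, Atil H a /\ ~ P H a &
      forall (K1 K2 : {group gT}) (a b : func),
        K1 \subset G -> K2 \subset G -> Atil K1 a -> Atil K2 b ->
        (forall (L H1 H2 : {group gT}) (g1 g2 : gT),
            L \subset G -> H1 \subset K1 -> H2 \subset K2 ->
            g1 \in G -> g2 \in G ->
            H1 :^ g1^-1 \subset L -> H2 :^ g2^-1 \subset L ->
            P L (fmul (nm L (H1 :^ g1^-1)%G (cj g1 (res H1 a)))
                      (nm L (H2 :^ g2^-1)%G (cj g2 (res H2 b))))) ->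
        P K1 a \/ P K2 b].

Definition Pideal (F : {group gT} -> bool) (q : nat) (H : {group gT}) (a : func) : Prop :=
  Atil H a /\
  forall I : {group gT}, I \subset H ->
    (((if F I then q else 1%N)%:Z) %| a I)%Z.

End GhostDefs.

From HB Require Import structures.
From mathcomp Require Import all_boot all_order all_algebra all_fingroup.
From Stdlib Require Import FunctionalExtensionality.
Set Implicit Arguments. Unset Strict Implicit. Unset Printing Implicit Defensive.
Import GRing.Theory Num.Theory.
Local Open Scope group_scope.

(* Primality makes each P(G/K) saturated: if m * a lies in P(G/K) with
   m <> 0, test a against the scalar m of Atilde(e) = Z.  Norming m from e
   gives a power of m at least as large as the power produced by norming
   m * a, so every Nakaoka test product is a multiple of a norm of m * a;
   since m is not in P(G/e) = (0), a lies in P(G/K).  Applied to the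
   indicator of the conjugacy class of I in Atilde(G), whose p_I-th multiple
   lies in P(G/G), this gives p_I | 1 unless p_I = 0.  If p_I = 0 and a lies
   in P(G/H), transferring (indicator of the class of I) * a to G gives an
   I-coordinate that is a positive multiple of a_I, hence a_I = 0.
   Conversely an element of P_{F,0}(G/H) is a combination of class
   indicators of subgroups with p_K = 1, and those are restrictions of
   elements of P(G/G). *)

Section Ghost.
Variable gT : finGroupType.
Implicit Types (H K L I J : {group gT}) (a b c v w : func gT).

Lemma Atil_conj H a I h : Atil H a -> I \subset H -> h \in H -> a (I :^ h)%G = a I.
Proof. by case=> _; apply. Qed.

Lemma Atil_fmull H c a :
  (forall I h, I \subset H -> h \in H -> c (I :^ h)%G = c I) ->
  Atil H a -> Atil H (fmul c a).
Proof.
move=> c_inv [a0 a_inv]; split=> [I nIH|I h sIH hH]; rewrite /fmul.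
  by rewrite a0 ?mulr0.
by rewrite c_inv ?a_inv.
Qed.

Lemma conjugatesP H K I :
  reflect (exists2 l, l \in H & I = (K :^ l)%G) ((I : {set gT}) \in K :^: H).
Proof.
apply: (iffP imsetP) => -[l lH eI]; exists l => //; first exact: val_inj.
by rewrite eI.
Qed.

Definition class_indicator H K : func gT :=
  fun I => (((I : {set gT}) \in K :^: H) : nat)%:R%R.

Lemma class_indicator_id H K : class_indicator H K K = 1%R.
Proof.
rewrite /class_indicator; case: conjugatesP => [//|[]].
by exists 1 => //; apply: val_inj; rewrite /= conjsg1.
Qed.

Lemma class_indicator_Atil H K : K \subset H -> Atil H (class_indicator H K).
Proof.
move=> sKH; split=> [I nIH|I h sIH hH]; rewrite /class_indicator.
  case: conjugatesP => // -[l lH eI].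
  by rewrite eI /= -(conjGid lH) conjSg sKH in nIH.
congr ((nat_of_bool _)%:R)%R; apply/imsetP/imsetP => -[l lH eI].
  by exists (l * h^-1); rewrite ?groupM ?groupV // conjsgM -eI conjsgK.
by exists (l * h); rewrite ?groupM // conjsgM -eI.
Qed.

Lemma card_dcosetsJ_le (K H : {set gT}) L l :
  l \in L -> #|dcosets (K :^ l) H L| <= #|dcosets K H L|.
Proof.
move=> lL; apply: (leq_trans _ (leq_imset_card (fun X => l^-1 *: X) _)).
apply/subset_leq_card/subsetP => _ /imsetP[g gL ->].
apply/imsetP; exists (K :* (l * g) * H); first by apply/imsetP; exists (l * g); rewrite ?groupM.
by rewrite conjsgE rcosetM !mulgA.
Qed.

Lemma card_dcosetsJ (K H : {set gT}) L l :
  l \in L -> #|dcosets (K :^ l) H L| = #|dcosets K H L|.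
Proof.
move=> lL; apply/eqP; rewrite eqn_leq card_dcosetsJ_le //=.
by rewrite -{1}(conjsgK l K) card_dcosetsJ_le ?groupV.
Qed.

Lemma card_dcosets_le (K H : {set gT}) L : #|dcosets K H L| <= #|dcosets K 1 L|.
Proof.
apply: (leq_trans _ (leq_imset_card (fun X => X * H) _)).
apply/subset_leq_card/subsetP => _ /imsetP[g gL ->].
by apply/imsetP; exists (K :* g * 1); [apply/imsetP; exists g | rewrite mulg1].
Qed.

Lemma res_scale H (m : int) a : res H (fmul (fun=> m) a) = fmul (fun=> m) (res H a).
Proof.
by apply: functional_extensionality => I; rewrite /res /fmul; case: ifP; rewrite ?mulr0.
Qed.

Lemma nm_scale L H (m : int) c J :
  nm L H (fmul (fun=> m) c) J = (m ^+ #|dcosets J H L| * nm L H c J)%R.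
Proof.
by rewrite /nm; case: ifP => _; rewrite ?mulr0 // -prodr_const -big_split.
Qed.

Lemma nm_trivial L H c J :
  H :=: 1 -> J \subset L -> nm L H c J = (c 1%G ^+ #|dcosets J H L|)%R.
Proof.
move=> H1 sJL; rewrite /nm sJL -prodr_const; apply: eq_bigr => D _.
by congr c; apply: val_inj; rewrite /= H1 setIg1.
Qed.

Lemma tr_class_indicator_coord K H I a :
  I \subset H -> H \subset K -> Atil H a ->
  exists2 n : int, (0 < n)%R & tr K H (fmul (class_indicator H I) a) I = (n * a I)%R.
Proof.
move=> sIH sHK Aa.
exists (\sum_(C in lcosets H K | I :^ repr C \subset H)
          class_indicator H I (I :^ repr C)%G)%R; last first.
  rewrite /tr (subset_trans sIH sHK) mulr_suml; apply: eq_bigr => C _.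
  rewrite /fmul /class_indicator; case: conjugatesP => [[l lH ->]|_]; last by rewrite !mul0r.
  by rewrite (Atil_conj Aa).
have HK : (H : {set gT}) \in lcosets H K by apply/lcosetsP; exists 1; rewrite ?lcoset1.
rewrite (bigD1 (H : {set gT})) /=; last by rewrite HK repr_group conjsg1 sIH.
have -> : (I :^ repr H)%G = I by apply: val_inj; rewrite /= repr_group conjsg1.
by rewrite class_indicator_id ltr_wpDr // sumr_ge0 // => C _; apply: ler0n.
Qed.

Lemma class_indicator_split H K v w (r : int) :
  K \subset H -> Atil H v -> Atil H w -> v K = (r * w K)%R ->
  v = fadd (fmul (fmul (fun=> r) (class_indicator H K)) w)
           (fmul (fun I => 1 - class_indicator H K I)%R v).
Proof.
move=> sKH Av Aw vK; apply: functional_extensionality => I.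
rewrite /fadd /fmul /class_indicator; case: conjugatesP => [[l lH ->]|_] /=.
  by rewrite !(Atil_conj _ sKH lH) // vK mulr1 subrr mul0r addr0.
by rewrite mulr0 mul0r subr0 mul1r add0r.
Qed.

Lemma mem_ideal_coordwise H (S : func gT -> Prop) v :
  is_ideal H S -> Atil H v ->
  (forall K, K \subset H -> v K != 0%R ->
     exists2 w, S w & exists r, v K = (r * w K)%R) ->
  S v.
Proof.
move=> [AtilS S0 SD _ SM].
have [n] := ubnP #|[set I | v I != 0%R]|; elim: n v => // n IHn v supp_v Av hv.
have [K nzK|v0] := pickP (fun I => v I != 0%R); last first.
  suff -> : v = @fzero gT by [].
  by apply: functional_extensionality => I; apply/eqP; rewrite -[_ == _]negbK v0.
have sKH : K \subset H by apply: contraR nzK => /Av.1 ->.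
have [w Sw [r vK]] := hv K sKH nzK.
have AK := class_indicator_Atil sKH.
rewrite (class_indicator_split sKH Av (AtilS _ Sw) vK).
apply: SD; first by apply: SM Sw; apply: Atil_fmull AK.
set u := fmul _ v.
apply: IHn.
- rewrite -ltnS (leq_trans _ supp_v) // ltnS; apply/proper_card/properP; split.
    by apply/subsetP => I; rewrite !inE /u /fmul; apply: contraNneq => ->; rewrite mulr0.
  by exists K; rewrite !inE /u /fmul ?class_indicator_id ?subrr ?mul0r ?eqxx.
- by apply: Atil_fmull Av => I h sIH hH; rewrite (Atil_conj AK).
- move=> I sIH; rewrite /u /fmul /class_indicator.
  case: conjugatesP => _ /=; rewrite ?subrr ?mul0r ?eqxx // subr0 mul1r; exact: hv.
Qed.

Section PrimeIdeal.
Variables (G : {group gT}) (P : {group gT} -> func gT -> Prop).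
Hypothesis prP : prime_tambara_ideal G P.
Hypothesis P1 : forall a, P 1%G a <-> (forall I, a I = 0%R).

Lemma prime_ideal_scale_cancel K a (m : int) :
  K \subset G -> m != 0%R -> Atil K a -> P K (fmul (fun=> m) a) -> P K a.
Proof.
move=> sKG m0 Aa Pma; have [[idP resP _ nmP cjP] _ primeP] := prP.
pose b : func gT := fun J => if J \subset [1 gT] then m else 0%R.
have Ab : Atil 1%G b.
  split=> [J /negbTE nJ|J h _ /set1P ->]; first by rewrite /b nJ.
  by rewrite /b /= conjsg1.
case: (primeP K 1%G a b sKG (sub1G G) Aa Ab) => [|//|/P1/(_ 1%G)]; last first.
  by rewrite /b sub1G => /eqP; rewrite (negbTE m0).
move=> L H1 H2 g1 g2 sLG sH1K /trivGP -> g1G _ sH1L _.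
have sH1G := subset_trans sH1K sKG.
pose H1' := (H1 :^ g1^-1)%G.
have PW : P L (nm L H1' (cj g1 (res H1 (fmul (fun=> m) a)))).
  exact: (nmP _ _ _ sH1L sLG (cjP _ _ _ sH1G g1G (resP _ _ _ sH1K sKG Pma))).
pose r : func gT := fun J =>
  if J \subset L then (m ^+ (#|dcosets J [1 gT] L| - #|dcosets J H1' L|))%R else 0%R.
have Ar : Atil L r.
  split=> [J /negbTE nJ|J h sJL hL]; first by rewrite /r nJ.
  by rewrite /r /= -{1}(conjGid hL) conjSg sJL !card_dcosetsJ.
suff -> : fmul (nm L H1' (cj g1 (res H1 a))) (nm L (1 :^ g2^-1)%G (cj g2 (res 1%G b)))
          = fmul r (nm L H1' (cj g1 (res H1 (fmul (fun=> m) a)))).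
  by have [_ _ _ _ mulP] := idP L sLG; apply: mulP.
rewrite res_scale; apply: functional_extensionality => J; rewrite {1 2}/fmul /r.
have [sJL|nJL] := boolP (J \subset L); last by rewrite /nm (negbTE nJL) !mul0r.
have conj1 : (1 :^ g2^-1)%G :=: 1 by rewrite /= conjs1g.
rewrite nm_scale (nm_trivial _ conj1 sJL) conj1.
have -> : cj g2 (res 1%G b) 1%G = m by rewrite /cj /res /b /= conjs1g subxx.
by rewrite mulrA -exprD subnK ?card_dcosets_le // mulrC.
Qed.

Variable p : {group gT} -> nat.
Hypothesis p_conj : forall I g, I \subset G -> g \in G -> p (I :^ g)%G = p I.
Hypothesis PG : forall a,
  P G a <-> Atil G a /\ forall I, I \subset G -> ((p I)%:Z %| a I)%Z.

Lemma P_G_class_indicator K (c : int) :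
  K \subset G -> ((p K)%:Z %| c)%Z -> P G (fmul (fun=> c) (class_indicator G K)).
Proof.
move=> sKG dvd_c; apply/PG; split; first exact: Atil_fmull (class_indicator_Atil sKG).
move=> I _; rewrite /fmul /class_indicator.
case: conjugatesP => [[l lG ->]|_]; last by rewrite mulr0 dvdz0.
by rewrite p_conj // mulr1.
Qed.

Lemma p_neq1 I : I \subset G -> (p I != 1%N) = (p I == 0%N).
Proof.
move=> sIG; have [-> //|pI0] := eqVneq (p I) 0%N; apply/negbTE/negPn.
have /PG[_ /(_ I sIG)] : P G (class_indicator G I).
  apply: (@prime_ideal_scale_cancel _ _ (p I)%:Z) => //.
    exact: class_indicator_Atil.
  exact: P_G_class_indicator.
by rewrite class_indicator_id dvdz1.
Qed.

Lemma P_coord_eq0 H a I :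
  H \subset G -> I \subset H -> P H a -> p I = 0%N -> a I = 0%R.
Proof.
move=> sHG sIH Pa pI0; have [[idP _ trP _ _] _ _] := prP.
have [AtilP _ _ _ mulP] := idP H sHG.
have [n n_gt0 trE] := tr_class_indicator_coord sIH sHG (AtilP a Pa).
have /PG[_ /(_ I (subset_trans sIH sHG))] :=
  trP _ _ _ sHG (subxx G) (mulP _ _ (class_indicator_Atil sIH) Pa).
by rewrite pI0 dvd0z trE mulf_eq0 (negbTE (lt0r_neq0 n_gt0)) => /eqP.
Qed.

Lemma P_sub_Pideal H a :
  H \subset G -> P H a -> Pideal (fun I => p I != 1%N) 0 H a.
Proof.
move=> sHG Pa; have [[idP _ _ _ _] _ _] := prP; have [AtilP _ _ _ _] := idP H sHG.
split=> [|I sIH]; first exact: AtilP.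
rewrite p_neq1 ?(subset_trans sIH sHG) //; case: eqP => [pI0|_]; last exact: dvd1z.
by rewrite dvd0z (P_coord_eq0 sHG sIH Pa pI0).
Qed.

Lemma Pideal_sub_P H a :
  H \subset G -> Pideal (fun I => p I != 1%N) 0 H a -> P H a.
Proof.
move=> sHG [Aa dvd_a]; have [[idP resP _ _ _] _ _] := prP.
apply: (mem_ideal_coordwise (idP H sHG) Aa) => K sKH nzK.
have sKG := subset_trans sKH sHG.
have pK1 : p K = 1%N.
  by apply/eqP; apply: contraNT nzK => pK; move: (dvd_a K sKH); rewrite pK dvd0z.
exists (res H (fmul (fun=> 1%R) (class_indicator G K))).
  by apply: resP sHG (subxx G) (P_G_class_indicator sKG _); rewrite pK1.
by exists (a K); rewrite /res sKH /fmul class_indicator_id !mulr1.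
Qed.

End PrimeIdeal.
End Ghost.

Theorem proposition4p12 (gT : finGroupType) (G : {group gT})
    (P : {group gT} -> func gT -> Prop) (p : {group gT} -> nat) :
  prime_tambara_ideal G P ->
  (* P(G/e) = (0) *)
  (forall a, P 1%G a <-> (forall I, a I = 0%R)) ->
  (* p_I is a conjugation-invariant family with P(G/G) = A~(G) cap prod p_I Z *)
  (forall (I : {group gT}) g, I \subset G -> g \in G -> p (I :^ g)%G = p I) ->
  (forall a, P G a <->
     Atil G a /\ forall I : {group gT}, I \subset G -> ((p I)%:Z %| a I)%Z) ->
  (forall I : {group gT}, I \subset G -> (p I != 1%N) = (p I == 0%N)) /\
  (forall H : {group gT}, H \subset G ->
     forall a, P H a <-> Pideal (fun I => p I != 1%N) 0 H a).
Proof.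
move=> prP P1 p_conj PG; split=> [I sIG|H sHG a].
  exact: (p_neq1 prP P1 p_conj PG sIG).
split; first exact: (P_sub_Pideal prP P1 p_conj PG sHG).
exact: (Pideal_sub_P prP p_conj PG sHG).
Qed.
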